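(* Let $\lambda_1,\ldots,\lambda_L>0$ and consider the convex program $$\min_{\{\hat\lambda_\ell,\gamma_\ell\}}\ \frac12\sum_{\ell=1}^L\log\frac{\lambda_\ell}{\gamma_\ell}\ \text{ s.t. } 0<\gamma_\ell\le\lambda_\ell,\ 0\le\hat\lambda_\ell,\ \sum_{\ell}D_\ell(\gamma_\ell,\hat\lambda_\ell)\le D,\ \sum_\ell P_\ell(\hat\lambda_\ell)\le P,$$ with $D_\ell(\gamma_\ell,\hat\lambda_\ell)=\lambda_\ell-2\sqrt{\hat\lambda_\ell(\lambda_\ell-\gamma_\ell)}+\hat\lambda_\ell$ and $P_\ell(\hat\lambda_\ell)=(\sqrt{\lambda_\ell}-\sqrt{\hat\lambda_\ell})^2$. Let $(D,P)$ be strictly feasible. Then the optimal solution $\{\gamma^*_\ell(D,P),\hat\lambda^*_\ell(D,P)\}$ is as follows: (1) If both the distortion and perception constraints are active, then there exist $\nu_1,\nu_2>0$ such that, for every $\ell$, $$\gamma^*_\ell(D,P)=\frac{\theta_\ell}{2\nu_1},\qquad \hat\lambda^*_\ell(D,P)=\frac{\lambda_\ell}{\big(1+\frac{(1-\theta_\ell)\nu_1}{\nu_2}\big)^2},$$ where $\theta_\ell$ is the unique solution of $\frac{\theta_\ell}{1+\frac{(1-\theta_\ell)\nu_1}{\nu_2}}=\sqrt{1-\frac{\theta_\ell}{2\nu_1\lambda_\ell}}$, and $\nu_1,\nu_2$ are such that $\sum_\ell D_\ell(\gamma^*_\ell(D,P),\hat\lambda^*_\ell(D,P))=D$ and $\sum_\ell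 P_\ell(\hat\lambda^*_\ell(D,P))=P$. In this case every component has positive rate, i.e., $\gamma^*_\ell(D,P)<\lambda_\ell$ for all $\ell$. (2) If the distortion constraint is active but the perception constraint is inactive, then there exists $\nu_1>0$ with $\sum_{\ell}[\lambda_\ell-\frac{1}{2\nu_1}]^+=[\sum_\ell\lambda_\ell-D]^+$ such that $\gamma^*_\ell(D,P)=\min\{\frac{1}{2\nu_1},\lambda_\ell\}$ and $\hat\lambda^*_\ell(D,P)=\lambda_\ell-\min\{\frac{1}{2\nu_1},\lambda_\ell\}$. (3) If the distortion constraint is inactive, then $\gamma^*_\ell(D,P)=\lambda_\ell$ for all $\ell$ (every component has zero rate), and $(\hat\lambda^*_\ell(D,P))_\ell$ can be any vector in the set $\{(\hat\lambda_\ell)_\ell:\ \sum_\ell P_\ell(\hat\lambda_\ell)\le P,\ \sum_\ell(\lambda_\ell+\hat\lambda_\ell)\le D,\ \hat\lambda_\ell\ge0\}$.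
   Context: This program equals the rate-distortion-perception function of an $L$-dimensional zero-mean Gaussian vector source with covariance eigenvalues $\lambda_\ell$, squared-error distortion and squared Wasserstein-2 perception loss; the rate of component $\ell$ is $\frac12\log\frac{\lambda_\ell}{\gamma_\ell}$. $[x]^+=\max\{0,x\}$; logs are natural. $(D,P)$ strictly feasible means there is a feasible point satisfying the distortion and perception constraints with strict inequality. A constraint is inactive if the program with that constraint removed (all others kept) has at least one optimal solution satisfying all the original constraints; otherwise it is active. *)

From HB Require Import structures.
From mathcomp Require Import all_boot all_order all_algebra.
From mathcomp Require Import reals exp.
Set Implicit Arguments. Unset Strict Implicit. Unset Printing Implicit Defensive.
Import Order.TTheory GRing.Theory Num.Theory.
Local Open Scope ring_scope.

Section RDP.
Variables (R : realType) (L : nat) (lam : 'I_L -> R).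

Definition Dl (l g lh : R) : R := l - 2 * Num.sqrt (lh * (l - g)) + lh.
Definition Pl (l lh : R) : R := (Num.sqrt l - Num.sqrt lh) ^+ 2.

Definition rate_obj (g : 'I_L -> R) : R :=
  2^-1 * \sum_(i < L) ln (lam i / g i).

Definition box_cons (g lh : 'I_L -> R) : Prop :=
  forall i, 0 < g i /\ g i <= lam i /\ 0 <= lh i.
Definition dist_cons (D : R) (g lh : 'I_L -> R) : Prop :=
  \sum_(i < L) Dl (lam i) (g i) (lh i) <= D.
Definition perc_cons (P : R) (lh : 'I_L -> R) : Prop :=
  \sum_(i < L) Pl (lam i) (lh i) <= P.

Definition feasible (D P : R) (g lh : 'I_L -> R) : Prop :=
  box_cons g lh /\ dist_cons D g lh /\ perc_cons P lh.
Definition feasible_noD (P : R) (g lh : 'I_L -> R) : Prop :=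
  box_cons g lh /\ perc_cons P lh.
Definition feasible_noP (D : R) (g lh : 'I_L -> R) : Prop :=
  box_cons g lh /\ dist_cons D g lh.

Definition optimal (F : ('I_L -> R) -> ('I_L -> R) -> Prop) (g lh : 'I_L -> R)
  : Prop :=
  F g lh /\ forall g' lh', F g' lh' -> rate_obj g <= rate_obj g'.

Definition strictly_feasible (D P : R) : Prop :=
  exists g lh, box_cons g lh /\
    \sum_(i < L) Dl (lam i) (g i) (lh i) < D /\
    \sum_(i < L) Pl (lam i) (lh i) < P.

Definition inactive_D (D P : R) : Prop :=
  exists g lh, optimal (feasible_noD P) g lh /\ feasible D P g lh.
Definition inactive_P (D P : R) : Prop :=
  exists g lh, optimal (feasible_noP D) g lh /\ feasible D P g lh.
Definition active_D (D P : R) : Prop := ~ inactive_D D P.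
Definition active_P (D P : R) : Prop := ~ inactive_P D P.

End RDP.

Definition pospart (R : realType) (x : R) : R := Num.max 0 x.

(* theta satisfies  theta/(1+(1-theta) nu1/nu2) = sqrt(1 - theta/(2 nu1 l)),
   with both sides defined (denominator nonzero, radicand nonnegative) *)
Definition theta_eq (R : realType) (nu1 nu2 l t : R) : Prop :=
  1 + (1 - t) * nu1 / nu2 != 0 /\ 0 <= 1 - t / (2 * nu1 * l) /\
  t / (1 + (1 - t) * nu1 / nu2) = Num.sqrt (1 - t / (2 * nu1 * l)).

Definition theta_unique_sol (R : realType) (nu1 nu2 l t : R) : Prop :=
  theta_eq nu1 nu2 l t /\ forall t', theta_eq nu1 nu2 l t' -> t' = t.

(* The program is convex: [Dl] is jointly convex because [(a, b) |-> sqrt (a b)]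
   is concave, and the rate is convex because [ln] is concave.  An optimum
   exists: it maximizes [prod_l gamma_l] over a compact relaxation of the
   feasible set.  From a Slater point, a one-dimensional separation argument,
   applied first to the perception and then to the distortion constraint,
   gives multipliers [nu1, nu2 >= 0] such that the optimum minimizes the
   Lagrangian over the box constraints; an active constraint has a positive
   multiplier and is tight.  The Lagrangian splits over components.
   Minimizing over [hat lambda_l] completes a square in [sqrt hat lambda_l];
   what remains is a convex function of [gamma_l] whose derivative tends to
   [+oo] at [lambda_l], so its minimizer is interior and stationary, and the
   stationarity equation is the equation for [theta_l].  When only the
   distortion constraint is active, the optimum is reverse water-filling, by
   [ln u <= u - 1]; when it is inactive, the rate is zero. *)

From HB Require Import structures.
From mathcomp Require Import all_boot all_order all_algebra.
From mathcomp Require Import all_classical all_reals all_analysis.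
From mathcomp Require Import ring lra.
Import Order.TTheory GRing.Theory Num.Theory.
Import numFieldNormedType.Exports.
Set Implicit Arguments.
Unset Strict Implicit.
Unset Printing Implicit Defensive.
Local Open Scope ring_scope.

Section RealFacts.
Variable R : realType.
Implicit Types (t a b c x y l g h : R).

Lemma ln_le_subr1 x : 0 < x -> ln x <= x - 1.
Proof. by move=> x0; have := @le_ln1Dx R (x - 1); rewrite addrCA subrr addr0; apply; lra. Qed.

Lemma ln_lt_subr1 x : 0 < x -> x != 1 -> ln x < x - 1.
Proof.
move=> x0 x1; have := @expR_gt1Dx R (x - 1); rewrite subr_eq0 addrCA subrr addr0.
by move=> /(_ x1) ltx; rewrite -(expRK (x - 1)) ltr_ln // posrE expR_gt0.
Qed.

Lemma concave_ln_mix t a b : 0 <= t <= 1 -> 0 < a -> 0 < b ->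
  t * ln a + (1 - t) * ln b <= ln (t * a + (1 - t) * b).
Proof. by move=> /andP[t0 t1]; exact: (concave_ln (Itv01 t0 t1)). Qed.

Lemma mix_le t a b c : 0 <= t <= 1 -> a <= c -> b <= c -> t * a + (1 - t) * b <= c.
Proof.
move=> /andP[t0 t1] ac bc; have := ler_wpM2l t0 ac.
by have := ler_wpM2l (_ : 0 <= 1 - t) bc; rewrite subr_ge0 => /(_ t1); lra.
Qed.

Lemma mix_gt0 t a b : 0 <= t <= 1 -> 0 < a -> 0 < b -> 0 < t * a + (1 - t) * b.
Proof.
move=> /andP[t0 t1] a0 b0; have [->|tn0] := eqVneq t 0; first by rewrite mul0r add0r subr0 mul1r.
apply: ltr_pwDl; first by rewrite mulr_gt0 // lt0r tn0.
by rewrite mulr_ge0 ?subr_ge0 // ltW.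
Qed.

Lemma ln_prod (I : finType) (F : I -> R) : (forall i, 0 < F i) ->
  ln (\prod_i F i) = \sum_i ln (F i).
Proof.
move=> Fp; suff [] : 0 < \prod_i F i /\ ln (\prod_i F i) = \sum_i ln (F i) by [].
apply: (big_ind2 (fun a b => 0 < a /\ ln a = b)) => [|a1 b1 a2 b2 [a10 <-] [a20 <-]|i _].
- by rewrite ln1.
- by rewrite mulr_gt0 // lnM.
- by rewrite Fp.
Qed.

Lemma ge0_sqr_ex a : 0 <= a -> exists2 x, 0 <= x & a = x ^+ 2.
Proof. by move=> a0; exists (Num.sqrt a); rewrite ?sqrtr_ge0 ?sqr_sqrtr. Qed.

Lemma concave_sqrtrM t (a1 a2 b1 b2 : R) : 0 <= t <= 1 ->
  0 <= a1 -> 0 <= a2 -> 0 <= b1 -> 0 <= b2 ->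
  t * Num.sqrt (a1 * b1) + (1 - t) * Num.sqrt (a2 * b2) <=
  Num.sqrt ((t * a1 + (1 - t) * a2) * (t * b1 + (1 - t) * b2)).
Proof.
move=> /andP[t0 t1] /ge0_sqr_ex[x1 x10 ->] /ge0_sqr_ex[x2 x20 ->].
move=> /ge0_sqr_ex[y1 y10 ->] /ge0_sqr_ex[y2 y20 ->].
rewrite -!exprMn !sqrtr_sqr !ger0_norm ?mulr_ge0 //.
rewrite -[X in X <= _]ger0_norm -?sqrtr_sqr; last first.
  by rewrite addr_ge0 // mulr_ge0 ?mulr_ge0 // subr_ge0.
apply: ler_wsqrtr; rewrite -subr_ge0.
have -> : (t * x1 ^+ 2 + (1 - t) * x2 ^+ 2) * (t * y1 ^+ 2 + (1 - t) * y2 ^+ 2) -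
  (t * (x1 * y1) + (1 - t) * (x2 * y2)) ^+ 2 = t * (1 - t) * (x1 * y2 - x2 * y1) ^+ 2.
  by ring.
by rewrite mulr_ge0 ?sqr_ge0 // mulr_ge0 // subr_ge0.
Qed.

Lemma continuous_sign_change (f : R -> R) a b x : a < x < b ->
  {for x, continuous f} ->
  (forall y, a < y < x -> f y <= 0) -> (forall y, x < y < b -> 0 <= f y) ->
  f x = 0.
Proof.
move=> /andP[ax xb] fx fl fr; apply/eqP; rewrite eq_le; apply/andP; split.
- rewrite leNgt; apply/negP => fx0.
  have : \forall y \near at_left x, [/\ a < y, y < x & 0 < f y].
    near=> y; split; near: y; [exact: nbhs_left_gt | exact: nbhs_left_lt |].
    exact: cvgr_gt _ (cvg_at_left_filter fx) _ fx0.
  by move=> /filter_ex[y [ay yx fy]]; have := fl y; rewrite ay yx leNgt fy => /(_ isT).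
- rewrite leNgt; apply/negP => fx0.
  have : \forall y \near at_right x, [/\ x < y, y < b & f y < 0].
    near=> y; split; near: y; [exact: nbhs_right_gt | exact: nbhs_right_lt |].
    exact: cvgr_lt _ (cvg_at_right_filter fx) _ fx0.
  by move=> /filter_ex[y [xy yb fy]]; have := fr y; rewrite xy yb leNgt fy => /(_ isT).
Unshelve. all: by end_near.
Qed.

End RealFacts.

Section ContinuousBig.
Variables (R : numFieldType) (T : topologicalType) (I : Type) (r : seq I) (P : pred I).
Variable F : I -> T -> R.
Hypothesis F_cont : forall i, continuous (F i).

Lemma continuous_sum : continuous (fun x => \sum_(i <- r | P i) F i x).
Proof.
elim: r => [|a s IH]; first by under eq_fun do rewrite big_nil; exact: cst_continuous.
under eq_fun do rewrite big_cons; case: (P a) => // x.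
by apply: cvgD; [exact: F_cont | exact: IH].
Qed.

Lemma continuous_prod : continuous (fun x => \prod_(i <- r | P i) F i x).
Proof.
elim: r => [|a s IH]; first by under eq_fun do rewrite big_nil; exact: cst_continuous.
under eq_fun do rewrite big_cons; case: (P a) => // x.
by apply: cvgM; [exact: F_cont | exact: IH].
Qed.

End ContinuousBig.

Section DistortionPerception.
Variable R : realType.
Implicit Types (t l g h : R).

Lemma DlE l g h : 0 <= h -> g <= l ->
  Dl l g h = g + (Num.sqrt h - Num.sqrt (l - g)) ^+ 2.
Proof.
move=> h0 gl; have lg : 0 <= l - g by rewrite subr_ge0.
by rewrite /Dl sqrtrM // sqrrB !sqr_sqrtr //; ring.
Qed.

Lemma Dl_ge l g h : 0 <= h -> g <= l -> g <= Dl l g h.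
Proof. by move=> h0 gl; rewrite DlE // lerDl sqr_ge0. Qed.

Lemma Dl_id l h : Dl l l h = l + h.
Proof. by rewrite /Dl subrr mulr0 sqrtr0 mulr0 subr0. Qed.

Lemma Pl_Dl0 l h : 0 <= l -> 0 <= h -> Pl l h = Dl l 0 h.
Proof. by move=> l0 h0; rewrite /Pl /Dl subr0 sqrtrM // sqrrB !sqr_sqrtr //; ring. Qed.

Lemma Dl_convex l t (g1 g2 h1 h2 : R) : 0 <= t <= 1 -> g1 <= l -> g2 <= l ->
  0 <= h1 -> 0 <= h2 ->
  Dl l (t * g1 + (1 - t) * g2) (t * h1 + (1 - t) * h2) <=
  t * Dl l g1 h1 + (1 - t) * Dl l g2 h2.
Proof.
move=> t01 g1l g2l h10 h20.
have e : l - (t * g1 + (1 - t) * g2) = t * (l - g1) + (1 - t) * (l - g2) by ring.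
have := concave_sqrtrM t01 h10 h20 (_ : 0 <= l - g1) (_ : 0 <= l - g2).
by rewrite /Dl e !subr_ge0 => /(_ g1l g2l); lra.
Qed.

Lemma Pl_le_sqr_bound l h (P : R) : 0 <= l -> 0 <= h -> Pl l h <= P ->
  h <= (Num.sqrt l + Num.sqrt P) ^+ 2.
Proof.
move=> l0 h0 hP; have := ler_wsqrtr hP; rewrite sqrtr_sqr => /ler_normlP[hl _].
by rewrite -[h]sqr_sqrtr // lerXn2r ?nnegrE ?addr_ge0 ?sqrtr_ge0 //; lra.
Qed.

Section Continuity.
Variables (T : topologicalType) (l : R).

Lemma Dl_continuous (g h : T -> R) : continuous g -> continuous h ->
  continuous (fun x => Dl l (g x) (h x)).
Proof.
move=> gc hc x; apply: cvgD; last exact: hc.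
apply: cvgB; first exact: cvg_cst.
apply: cvgM; first exact: cvg_cst.
apply: (continuous_comp (f := fun x => h x * (l - g x))); last exact: sqrt_continuous.
by apply: cvgM; [exact: hc | apply: cvgB; [exact: cvg_cst | exact: gc]].
Qed.

Lemma Pl_continuous (h : T -> R) : continuous h -> continuous (fun x => Pl l (h x)).
Proof.
move=> hc x; have sqrt_h : {for x, continuous (fun x => Num.sqrt (h x))}.
  by apply: (continuous_comp (f := h)); [exact: hc | exact: sqrt_continuous].
by apply: cvgM; apply: cvgB => //; exact: cvg_cst.
Qed.

End Continuity.
End DistortionPerception.

(** * Lagrange multipliers *)

Section SlaterMultiplier.
Variables (R : realType) (T : Type) (C : T -> Prop) (f c : T -> R) (x : T).
Hypotheses (Cx : C x) (cx_le0 : c x <= 0)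
  (x_min : forall y, C y -> c y <= 0 -> f x <= f y)
  (slater : exists2 y, C y & c y < 0)
  (C_mix : forall y1 y2 t, C y1 -> C y2 -> 0 <= t <= 1 -> exists2 z, C z &
     f z <= t * f y1 + (1 - t) * f y2 /\ c z <= t * c y1 + (1 - t) * c y2).

(* The multiplier is the infimum of these slopes. *)
Let slopes := [set a : R | exists2 y, C y /\ c y < 0 & a = (f y - f x) / - c y]%classic.

Let slopes_ge0 a : slopes a -> 0 <= a.
Proof.
move=> [y [Cy cy] ->]; rewrite divr_ge0 ?subr_ge0 ?oppr_ge0 ?x_min //; exact: ltW.
Qed.

Let slope_separation y1 y : C y1 -> c y1 < 0 -> C y -> 0 < c y ->
  (f x - f y) / c y <= (f y1 - f x) / - c y1.
Proof.
move=> Cy1 cy1 Cy cy; pose t := c y / (c y - c y1).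
have ct : 0 < c y - c y1 by lra.
have t01 : 0 <= t <= 1 by rewrite divr_ge0 ?ler_pdivrMr //=; lra.
have [z Cz [fz cz]] := C_mix Cy1 Cy t01.
(* [t] is chosen so that the mixture [z] just meets the constraint *)
have cz0 : c z <= 0.
  suff <- : t * c y1 + (1 - t) * c y = 0 by [].
  by rewrite /t; field; rewrite gt_eqF.
have := le_trans (x_min Cz cz0) fz.
have -> : t * f y1 + (1 - t) * f y = (f y1 * c y - f y * c y1) / (c y - c y1).
  by rewrite /t; field; rewrite gt_eqF.
rewrite ler_pdivlMr // => h.
rewrite ler_pdivrMr // mulrAC ler_pdivlMr ?oppr_gt0 //; lra.
Qed.

Lemma slater_multiplier :
  exists2 nu, 0 <= nu & nu * c x = 0 /\ forall y, C y -> f x <= f y + nu * c y.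
Proof.
have [y0 Cy0 cy0] := slater.
have slopes_ne0 : (slopes !=set0)%classic by exists ((f y0 - f x) / - c y0), y0.
have weak_duality y : C y -> f x <= f y + inf slopes * c y.
  move=> Cy; case: (ltgtP (c y) 0) => cy.
  - have : inf slopes <= (f y - f x) / - c y.
      by apply: ge_inf; [exists 0; exact: slopes_ge0 | exists y].
    by rewrite ler_pdivlMr ?oppr_gt0 //; lra.
  - suff : (f x - f y) / c y <= inf slopes by rewrite ler_pdivrMr //; lra.
    apply: lb_le_inf => // _ [y1 [Cy1 cy1] ->]; exact: slope_separation.
  - by rewrite cy mulr0 addr0 x_min // cy.
have nu0 : 0 <= inf slopes := lb_le_inf slopes_ne0 slopes_ge0.
exists (inf slopes) => //; split=> //; apply/eqP; rewrite eq_le.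
by rewrite mulr_ge0_le0 //= -(lerD2l (f x)) addr0 weak_duality.
Qed.

End SlaterMultiplier.

Section Program.
Variables (R : realType) (L : nat) (lam : 'I_L -> R).
Hypothesis lam_gt0 : forall i, 0 < lam i.
Implicit Types (g lh : 'I_L -> R) (t : R).

Definition Dsum g lh := \sum_(i < L) Dl (lam i) (g i) (lh i).
Definition Psum lh := \sum_(i < L) Pl (lam i) (lh i).
Definition mix t (a b : 'I_L -> R) i := t * a i + (1 - t) * b i.

Lemma box_cons_mix t g1 g2 h1 h2 : 0 <= t <= 1 ->
  box_cons lam g1 h1 -> box_cons lam g2 h2 -> box_cons lam (mix t g1 g2) (mix t h1 h2).
Proof.
move=> t01 b1 b2 i; have [g1p [g1l h1p]] := b1 i; have [g2p [g2l h2p]] := b2 i.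
move: (t01) => /andP[t0 t1]; rewrite /mix mix_gt0 //; split=> //; split.
- exact: mix_le.
- by rewrite addr_ge0 ?mulr_ge0 ?subr_ge0.
Qed.

Lemma Dsum_mix t g1 g2 h1 h2 : 0 <= t <= 1 -> box_cons lam g1 h1 -> box_cons lam g2 h2 ->
  Dsum (mix t g1 g2) (mix t h1 h2) <= t * Dsum g1 h1 + (1 - t) * Dsum g2 h2.
Proof.
move=> t01 b1 b2; rewrite /Dsum !mulr_sumr -big_split /=; apply: ler_sum => i _.
have [_ [g1l h1p]] := b1 i; have [_ [g2l h2p]] := b2 i; exact: Dl_convex.
Qed.

Lemma Psum_mix t h1 h2 : 0 <= t <= 1 -> (forall i, 0 <= h1 i) -> (forall i, 0 <= h2 i) ->
  Psum (mix t h1 h2) <= t * Psum h1 + (1 - t) * Psum h2.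
Proof.
move=> t01 h1p h2p; rewrite /Psum !mulr_sumr -big_split /=; apply: ler_sum => i _.
have li := ltW (lam_gt0 i); move: (t01) => /andP[t0 t1].
have := Dl_convex t01 li li (h1p i) (h2p i).
by rewrite !Pl_Dl0 ?addr_ge0 ?mulr_ge0 ?subr_ge0 // !mulr0 addr0.
Qed.

Lemma rate_objE g : (forall i, 0 < g i) ->
  rate_obj lam g = 2^-1 * (\sum_(i < L) ln (lam i) - \sum_(i < L) ln (g i)).
Proof.
by move=> gp; rewrite /rate_obj -sumrB; congr (_ * _); apply: eq_bigr => i _; rewrite ln_div ?posrE.
Qed.

Lemma rate_obj_mix t g1 g2 : 0 <= t <= 1 -> (forall i, 0 < g1 i) -> (forall i, 0 < g2 i) ->
  rate_obj lam (mix t g1 g2) <= t * rate_obj lam g1 + (1 - t) * rate_obj lam g2.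
Proof.
move=> t01 g1p g2p; have mp i : 0 < mix t g1 g2 i by exact: mix_gt0.
rewrite !rate_objE //; set S := \sum_(i < L) ln (lam i).
have -> : forall X1 X2 : R, t * (2^-1 * (S - X1)) + (1 - t) * (2^-1 * (S - X2)) =
  2^-1 * (S - (t * X1 + (1 - t) * X2)) by move=> X1 X2; ring.
rewrite ler_wpM2l ?invr_ge0 // lerB // !mulr_sumr -big_split /=.
by apply: ler_sum => i _; exact: concave_ln_mix.
Qed.

Lemma program_mix t g1 g2 h1 h2 : 0 <= t <= 1 ->
  box_cons lam g1 h1 -> box_cons lam g2 h2 ->
  [/\ box_cons lam (mix t g1 g2) (mix t h1 h2),
      rate_obj lam (mix t g1 g2) <= t * rate_obj lam g1 + (1 - t) * rate_obj lam g2,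
      Dsum (mix t g1 g2) (mix t h1 h2) <= t * Dsum g1 h1 + (1 - t) * Dsum g2 h2 &
      Psum (mix t h1 h2) <= t * Psum h1 + (1 - t) * Psum h2].
Proof.
move=> t01 b1 b2; split; [exact: box_cons_mix | | exact: Dsum_mix |].
- by apply: rate_obj_mix => // i; [case: (b1 i) | case: (b2 i)].
- by apply: Psum_mix => // i; [case: (b1 i) => _ [] | case: (b2 i) => _ []].
Qed.

Lemma rate_obj_ge0 g lh : box_cons lam g lh -> 0 <= rate_obj lam g.
Proof.
move=> b; rewrite mulr_ge0 ?invr_ge0 // sumr_ge0 // => i _.
by have [gp [gl _]] := b i; rewrite ln_ge0 // ler_pdivlMr // mul1r.
Qed.

Lemma rate_obj_lam : rate_obj lam lam = 0.
Proof. by rewrite /rate_obj big1 ?mulr0 // => i _; rewrite divff ?ln1 // gt_eqF. Qed.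

Lemma rate_obj_eq0 g lh : box_cons lam g lh -> rate_obj lam g = 0 -> forall i, g i = lam i.
Proof.
move=> b /eqP; rewrite mulf_eq0 invr_eq0 pnatr_eq0 /= psumr_eq0 => [/allP r0 i|i _].
  have [gp _] := b i; move: (r0 i (mem_index_enum i)) => /=.
  by rewrite ln_eq0 ?divr_gt0 // => /eqP/divr1_eq.
by have [gp [gl _]] := b i; rewrite ln_ge0 // ler_pdivlMr // mul1r.
Qed.

Definition lagrangian nu1 nu2 g lh := rate_obj lam g + nu1 * Dsum g lh + nu2 * Psum lh.

Definition lagrangian_min nu1 nu2 g lh :=
  forall g' lh', box_cons lam g' lh' -> lagrangian nu1 nu2 g lh <= lagrangian nu1 nu2 g' lh'.

Lemma kkt_multipliers D P g lh :
  strictly_feasible lam D P -> optimal lam (feasible lam D P) g lh ->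
  exists nu1 nu2, [/\ 0 <= nu1, 0 <= nu2, nu1 * (Dsum g lh - D) = 0,
    nu2 * (Psum lh - P) = 0 & lagrangian_min nu1 nu2 g lh].
Proof.
move=> [g0 [lh0 [b0 [d0 p0]]]] [[bx [dx px]] opt].
pose T := (('I_L -> R) * ('I_L -> R))%type.
(* first dualize the perception constraint, keeping the distortion one *)
have [||||nu2 nu2_ge0 [slackP minP]] := @slater_multiplier R T
  (fun y => box_cons lam y.1 y.2 /\ Dsum y.1 y.2 <= D)
  (fun y => rate_obj lam y.1) (fun y => Psum y.2 - P) (g, lh) (conj bx dx).
- by rewrite subr_le0; exact: px.
- by move=> [g' lh'] [b' d'] p'; apply: opt; split=> //; split=> //; rewrite subr_le0 in p'.
- by exists (g0, lh0); rewrite ?subr_lt0 //; split=> //; exact: ltW.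
- move=> [g1 h1] [g2 h2] t [b1 d1] [b2 d2] t01.
  have [bm rm dm pm] := program_mix t01 b1 b2.
  exists (mix t g1 g2, mix t h1 h2); first by split=> //; apply: le_trans dm _; exact: mix_le.
  by split=> //=; lra.
have [||||nu1 nu1_ge0 [slackD minD]] := @slater_multiplier R T
  (fun y => box_cons lam y.1 y.2)
  (fun y => rate_obj lam y.1 + nu2 * (Psum y.2 - P)) (fun y => Dsum y.1 y.2 - D) (g, lh) bx.
- by rewrite subr_le0; exact: dx.
- move=> [g' lh'] b' d'; rewrite /= slackP addr0; apply: (minP (g', lh')).
  by rewrite subr_le0 in d'.
- by exists (g0, lh0); rewrite ?subr_lt0.
- move=> [g1 h1] [g2 h2] t b1 b2 t01.
  have [bm rm dm pm] := program_mix t01 b1 b2.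
  exists (mix t g1 g2, mix t h1 h2) => //=; split; last lra.
  have := ler_wpM2l nu2_ge0 pm; lra.
exists nu1, nu2; split=> // g' lh' b'.
by have := minD (g', lh') b'; rewrite /lagrangian /=; lra.
Qed.

Lemma kkt_active D P g lh :
  strictly_feasible lam D P -> optimal lam (feasible lam D P) g lh ->
  active_D lam D P -> active_P lam D P ->
  exists nu1 nu2, [/\ 0 < nu1, 0 < nu2, Dsum g lh = D, Psum lh = P &
    lagrangian_min nu1 nu2 g lh].
Proof.
move=> sf opt aD aP; have [[bx [dx px]] _] := opt.
have [nu1 [nu2 [nu1_ge0 nu2_ge0 slackD slackP lmin]]] := kkt_multipliers sf opt.
have nu1_gt0 : 0 < nu1.
  rewrite lt0r nu1_ge0 andbT; apply/eqP => nu1_0; apply: aD; exists g, lh; split=> //.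
  split=> [|g' lh' [b' p']]; first by split.
  have := lmin g' lh' b'; have := ler_wpM2l nu2_ge0 (p' : Psum lh' <= P).
  by rewrite /lagrangian nu1_0; lra.
have nu2_gt0 : 0 < nu2.
  rewrite lt0r nu2_ge0 andbT; apply/eqP => nu2_0; apply: aP; exists g, lh; split=> //.
  split=> [|g' lh' [b' d']]; first by split.
  have := lmin g' lh' b'; have := ler_wpM2l nu1_ge0 (d' : Dsum g' lh' <= D).
  by rewrite /lagrangian nu2_0; lra.
exists nu1, nu2; split=> //; apply/eqP; rewrite -subr_eq0.
- by move/eqP: slackD; rewrite mulf_eq0 gt_eqF.
- by move/eqP: slackP; rewrite mulf_eq0 gt_eqF.
Qed.

Definition lagrangian1 (l nu1 nu2 g h : R) :=
  2^-1 * ln (l / g) + nu1 * Dl l g h + nu2 * Pl l h.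

Lemma lagrangianE nu1 nu2 g lh :
  lagrangian nu1 nu2 g lh = \sum_(i < L) lagrangian1 (lam i) nu1 nu2 (g i) (lh i).
Proof. by rewrite /lagrangian /rate_obj /Dsum /Psum !mulr_sumr -!big_split. Qed.

Lemma lagrangian_min_component nu1 nu2 g lh :
  box_cons lam g lh -> lagrangian_min nu1 nu2 g lh ->
  forall j (a b : R), 0 < a -> a <= lam j -> 0 <= b ->
  lagrangian1 (lam j) nu1 nu2 (g j) (lh j) <= lagrangian1 (lam j) nu1 nu2 a b.
Proof.
move=> bx lmin j a b a0 al b0.
pose g' i := if i == j then a else g i; pose lh' i := if i == j then b else lh i.
have bx' : box_cons lam g' lh' by move=> i; rewrite /g' /lh'; case: eqP => [->|].
have := lmin g' lh' bx'; rewrite !lagrangianE (bigD1 j) // [X in _ <= X](bigD1 j) //=.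
rewrite /g' /lh' eqxx; set rest := (X in _ <= _ + X).
have -> : rest = \sum_(i < L | i != j) lagrangian1 (lam i) nu1 nu2 (g i) (lh i).
  by apply: eq_bigr => i /negbTE ->.
lra.
Qed.

End Program.

(** * The single-component problem *)

Section Component.
Variables (R : realType) (l nu1 nu2 : R).
Hypotheses (l_gt0 : 0 < l) (nu1_gt0 : 0 < nu1) (nu2_gt0 : 0 < nu2).
Implicit Types (g h x y : R).

Let sq : R := Num.sqrt l.
Let sl g : R := Num.sqrt (l - g).
Let nu12 : R := nu1 * nu2 / (nu1 + nu2).

Definition best_sqrth g := (nu1 * sl g + nu2 * sq) / (nu1 + nu2).

(* [profile g] is [lagrangian1 l nu1 nu2 g h] minimized over [h], attained at
   [sqrt h = best_sqrth g]; [dprofile] is its derivative. *)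
Definition profile g := 2^-1 * ln (l / g) + nu1 * g + nu12 * (sq - sl g) ^+ 2.
Definition dprofile g := - (2 * g)^-1 + nu1 - nu12 + nu12 * sq / sl g.

Lemma dprofile_continuous x : 0 < x < l -> {for x, continuous dprofile}.
Proof.
move=> /andP[x0 xl]; rewrite /dprofile.
apply: cvgD; first apply: cvgB; first apply: cvgD; first apply: cvgN.
- apply: cvgV; first by rewrite mulf_neq0 // gt_eqF.
  by apply: cvgM; [exact: cvg_cst | exact: cvg_id].
- exact: cvg_cst.
- exact: cvg_cst.
- apply: cvgM; first exact: cvg_cst.
  apply: cvgV; first by rewrite gt_eqF // sqrtr_gt0 subr_gt0.
  apply: (continuous_comp (f := fun y => l - y)); last exact: sqrt_continuous.
  by apply: cvgB; [exact: cvg_cst | exact: cvg_id].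
Qed.

Lemma best_sqrth_ge0 g : 0 <= best_sqrth g.
Proof. by rewrite divr_ge0 ?addr_ge0 ?mulr_ge0 ?sqrtr_ge0 // ltW. Qed.

Lemma lagrangian1E g h : 0 <= h -> g <= l ->
  lagrangian1 l nu1 nu2 g h = profile g + (nu1 + nu2) * (Num.sqrt h - best_sqrth g) ^+ 2.
Proof.
move=> h0 gl; rewrite /lagrangian1 DlE // /Pl /profile /best_sqrth /nu12 -/(sl g) -/sq.
by field; rewrite gt_eqF ?addr_gt0.
Qed.

Lemma sl_sqr g : g <= l -> sl g ^+ 2 = l - g.
Proof. by move=> gl; rewrite sqr_sqrtr // subr_ge0. Qed.

Let sq_gt0 : 0 < sq. Proof. by rewrite sqrtr_gt0. Qed.

Let sq_sqr : sq ^+ 2 = l. Proof. by rewrite sqr_sqrtr // ltW. Qed.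

Lemma nu12_gt0 : 0 < nu12.
Proof. by rewrite divr_gt0 ?mulr_gt0 ?addr_gt0. Qed.

Lemma profile_tangent x y : 0 < x -> x < l -> 0 < y -> y <= l ->
  profile x + dprofile x * (y - x) <= profile y.
Proof.
move=> x0 xl y0 yl; have sx0 : 0 < sl x by rewrite sqrtr_gt0 subr_gt0.
have ln_tangent : 2^-1 * ln (l / x) - (2 * x)^-1 * (y - x) <= 2^-1 * ln (l / y).
  rewrite !ln_div ?posrE //; have := ln_le_subr1 (divr_gt0 y0 x0).
  rewrite ln_div ?posrE // (_ : y / x - 1 = 2 * ((2 * x)^-1 * (y - x))); first lra.
  by field; rewrite gt_eqF.
have sq_tangent : (sq - sl x) ^+ 2 + (sq - sl x) / sl x * (y - x) <= (sq - sl y) ^+ 2.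
  rewrite -subr_ge0 (_ : y - x = sl x ^+ 2 - sl y ^+ 2); last by rewrite !sl_sqr ?(ltW xl) //; ring.
  rewrite (_ : _ - _ = sq * (sl x - sl y) ^+ 2 / sl x); last by field; rewrite gt_eqF.
  by rewrite divr_ge0 ?(ltW sx0) // mulr_ge0 ?sqrtr_ge0 ?sqr_ge0.
have := ler_wpM2l (ltW nu12_gt0) sq_tangent.
have -> : dprofile x * (y - x) = - ((2 * x)^-1 * (y - x)) + nu1 * (y - x) +
    nu12 * ((sq - sl x) / sl x * (y - x)) by rewrite /dprofile; field; rewrite !gt_eqF.
rewrite /profile; lra.
Qed.

Lemma dprofile_gt0_near_l : exists2 x, 0 < x < l & 0 < dprofile x.
Proof.
(* for [x >= l / 2] with [sl x <= nu12 * sq * l], the last term of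
   [dprofile x] exceeds [(2 * x)^-1] *)
have nu12_lt : nu12 < nu1.
  by rewrite /nu12 ltr_pdivrMr ?addr_gt0 //; have := mulr_gt0 nu1_gt0 nu1_gt0; lra.
pose c := nu12 * sq * l.
have c0 : 0 < c by rewrite /c mulr_gt0 // mulr_gt0 ?nu12_gt0 // sqrtr_gt0.
pose d := Num.min (l / 2) (c ^+ 2).
have d0 : 0 < d by rewrite lt_min divr_gt0 ?exprn_gt0.
have dl : d <= l / 2 by rewrite ge_min lexx.
exists (l - d); first by apply/andP; split; lra.
have sx : sl (l - d) = Num.sqrt d by rewrite /sl opprB addrC subrK.
have sx0 : 0 < sl (l - d) by rewrite sx sqrtr_gt0.
have sxc : sl (l - d) <= c.
  by rewrite sx -(ger0_norm (ltW c0)) -sqrtr_sqr ler_wsqrtr // ge_min lexx orbT.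
have i1 : (2 * (l - d))^-1 <= l^-1 by rewrite lef_pV2 ?posrE ?mulr_gt0; lra.
have i2 : l^-1 <= nu12 * sq / sl (l - d).
  by rewrite ler_pdivlMr // ler_pdivrMl // mulrC.
rewrite /dprofile; lra.
Qed.

Section Minimizer.
Variables g0 h0 : R.
Hypotheses (g0_gt0 : 0 < g0) (g0_le : g0 <= l) (h0_ge0 : 0 <= h0).
Hypothesis g0h0_min : forall g h, 0 < g -> g <= l -> 0 <= h ->
  lagrangian1 l nu1 nu2 g0 h0 <= lagrangian1 l nu1 nu2 g h.

Lemma minimizer_sqrth : Num.sqrt h0 = best_sqrth g0.
Proof.
have := g0h0_min g0_gt0 g0_le (sqr_ge0 (best_sqrth g0)).
rewrite !lagrangian1E ?sqr_ge0 // sqrtr_sqr ger0_norm ?best_sqrth_ge0 // subrr.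
rewrite expr0n mulr0 addr0 gerDl pmulr_rle0 ?addr_gt0 // => sq_le0.
by apply/eqP; rewrite -subr_eq0 -sqrf_eq0 eq_le sq_le0 sqr_ge0.
Qed.

Lemma minimizer_profile g : 0 < g -> g <= l -> profile g0 <= profile g.
Proof.
move=> g_gt0 gl; have := g0h0_min g_gt0 gl (sqr_ge0 (best_sqrth g)).
rewrite !lagrangian1E ?sqr_ge0 // sqrtr_sqr ger0_norm ?best_sqrth_ge0 // minimizer_sqrth.
by rewrite !subrr expr0n !mulr0 !addr0.
Qed.

Lemma minimizer_lt : g0 < l.
Proof.
rewrite lt_neqAle g0_le andbT; apply/eqP => g0l.
have [x /andP[x0 xl] dx0] := dprofile_gt0_near_l.
have := profile_tangent x0 xl l_gt0 (lexx l); have := minimizer_profile x0 (ltW xl).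
have : 0 < dprofile x * (l - x) by rewrite mulr_gt0 // subr_gt0.
by rewrite g0l; lra.
Qed.

(* by convexity and minimality, [dprofile] is nonpositive left of [g0] and
   nonnegative right of it *)
Lemma minimizer_stationary : dprofile g0 = 0.
Proof.
have tangent y : 0 < y -> y < l -> dprofile y * (g0 - y) <= 0.
  move=> y0 yl; have := profile_tangent y0 yl g0_gt0 g0_le.
  by have := minimizer_profile y0 (ltW yl); lra.
apply: (@continuous_sign_change _ _ 0 l); rewrite ?g0_gt0 ?minimizer_lt //.
- by apply: dprofile_continuous; rewrite g0_gt0 minimizer_lt.
- move=> y /andP[y0 yg0]; have := tangent y y0 (lt_trans yg0 minimizer_lt).
  by rewrite pmulr_lle0 // subr_gt0.
- move=> y /andP[g0y yl]; have := tangent y (lt_trans g0_gt0 g0y) yl.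
  by rewrite nmulr_lle0 // subr_lt0.
Qed.

Lemma minimizer_theta :
  theta_eq nu1 nu2 l (2 * nu1 * g0) /\ h0 = l / (1 + (1 - 2 * nu1 * g0) * nu1 / nu2) ^+ 2.
Proof.
have s0 : 0 < sl g0 by rewrite sqrtr_gt0 subr_gt0 minimizer_lt.
have sq0 := sq_gt0; have n12 : 0 < nu1 + nu2 by rewrite addr_gt0.
have W0 : 0 < nu1 * sl g0 + nu2 * sq by rewrite addr_gt0 // mulr_gt0.
(* solve the stationarity equation for [theta = 2 * nu1 * g0] *)
have eth : 2 * nu1 * g0 = (nu1 + nu2) * sl g0 / (nu1 * sl g0 + nu2 * sq).
  apply: (mulIf (lt0r_neq0 W0)); rewrite divfK ?lt0r_neq0 //.
  have : 2 * g0 * (nu1 + nu2) * sl g0 * dprofile g0 = 0 by rewrite minimizer_stationary mulr0.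
  rewrite /dprofile /nu12 => h; apply/eqP; rewrite -subr_eq0 -h; apply/eqP.
  by field; rewrite !gt_eqF ?addr_gt0.
have eden : 1 + (1 - 2 * nu1 * g0) * nu1 / nu2 =
    sq * (nu1 + nu2) / (nu1 * sl g0 + nu2 * sq).
  by rewrite eth; field; rewrite !gt_eqF.
split; [split; [|split] |].
- by rewrite eden gt_eqF // divr_gt0 // mulr_gt0 ?sq_gt0 ?addr_gt0.
- by rewrite subr_ge0 ler_pdivrMr ?mulr_gt0 // mul1r ler_wpM2l ?mulr_ge0 ?(ltW nu1_gt0).
- have -> : 1 - 2 * nu1 * g0 / (2 * nu1 * l) = (sl g0 / sq) ^+ 2.
    by rewrite expr_div_n sl_sqr // sq_sqr; field; rewrite !gt_eqF.
  rewrite sqrtr_sqr ger0_norm ?divr_ge0 ?ltW // eden eth.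
  by field; rewrite ?gt_eqF.
- rewrite eden -[h0]sqr_sqrtr // minimizer_sqrth /best_sqrth -[in RHS]sq_sqr.
  by field; rewrite ?gt_eqF.
Qed.

End Minimizer.
End Component.

Section Theta.
Variables (R : realType) (nu1 nu2 l : R).
Hypotheses (nu1_gt0 : 0 < nu1) (nu2_gt0 : 0 < nu2) (l_gt0 : 0 < l).

Lemma theta_eq_gt0 t : theta_eq nu1 nu2 l t -> 0 < t /\ 0 < 1 + (1 - t) * nu1 / nu2.
Proof.
move=> [den_neq0 [rad_ge0 e]]; set den := 1 + _ in den_neq0 e *.
have K0 : 0 < 2 * nu1 * l by rewrite !mulr_gt0.
have t_gt0 : 0 < t.
  rewrite ltNge; apply/negP => t_le0.
  have den_gt0 : 0 < den by rewrite ltr_pwDl ?divr_ge0 ?mulr_ge0 ?subr_ge0 ?ltW //; lra.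
  have : Num.sqrt (1 - t / (2 * nu1 * l)) <= 0 by rewrite -e pmulr_lle0 ?invr_gt0.
  rewrite leNgt sqrtr_gt0 subr_gt0 => /negP; apply; apply: le_lt_trans (ltr01).
  by rewrite pmulr_lle0 ?invr_gt0.
split=> //; rewrite lt_neqAle eq_sym den_neq0 /= -invr_ge0 -(pmulr_rge0 _ t_gt0).
by rewrite e sqrtr_ge0.
Qed.

Lemma theta_eq_uniq t1 t2 : theta_eq nu1 nu2 l t1 -> theta_eq nu1 nu2 l t2 -> t2 = t1.
Proof.
wlog t12 : t1 t2 / t1 < t2.
  move=> wlog h1 h2; case: (ltgtP t1 t2) => [t12|t21|//]; first exact: wlog.
  by rewrite (wlog t2 t1).
move=> h1 h2; have [_ d1] := theta_eq_gt0 h1; have [_ d2] := theta_eq_gt0 h2.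
case: h1 => _ [_ e1]; case: h2 => _ [_ e2].
(* the left-hand side of the equation increases in t, the right-hand side does not *)
have : t1 / (1 + (1 - t1) * nu1 / nu2) < t2 / (1 + (1 - t2) * nu1 / nu2).
  rewrite ltr_pdivrMr // mulrAC ltr_pdivlMr // -subr_gt0.
  have -> : t2 * (1 + (1 - t1) * nu1 / nu2) - t1 * (1 + (1 - t2) * nu1 / nu2) =
    (t2 - t1) * (1 + nu1 / nu2) by ring.
  by rewrite mulr_gt0 ?subr_gt0 // addr_gt0 ?divr_gt0.
rewrite e1 e2 ltNge ler_wsqrtr // lerB // ler_pM2r ?invr_gt0 ?mulr_gt0 //.
exact: ltW.
Qed.

End Theta.

Section Cases.
Variables (R : realType) (L : nat) (lam : 'I_L -> R).
Hypothesis lam_gt0 : forall i, 0 < lam i.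

Lemma both_active_solution D P g lh :
  strictly_feasible lam D P -> optimal lam (feasible lam D P) g lh ->
  active_D lam D P -> active_P lam D P ->
  exists nu1 nu2 : R, 0 < nu1 /\ 0 < nu2 /\
  exists theta : 'I_L -> R,
    (forall i, theta_unique_sol nu1 nu2 (lam i) (theta i)) /\
    (forall i, g i = theta i / (2 * nu1) /\
               lh i = lam i / (1 + (1 - theta i) * nu1 / nu2) ^+ 2) /\
    \sum_(i < L) Dl (lam i) (g i) (lh i) = D /\
    \sum_(i < L) Pl (lam i) (lh i) = P /\
    (forall i, g i < lam i).
Proof.
move=> sf opt aD aP; have [[bx _] _] := opt.
have [nu1 [nu2 [nu1_gt0 nu2_gt0 DE PE lmin]]] := kkt_active lam_gt0 sf opt aD aP.
have comp_min := lagrangian_min_component bx lmin.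
have comp i : [/\ g i < lam i, theta_eq nu1 nu2 (lam i) (2 * nu1 * g i) &
    lh i = lam i / (1 + (1 - 2 * nu1 * g i) * nu1 / nu2) ^+ 2].
  have [gp [gl hp]] := bx i; have min_i := comp_min i.
  have [th_eq lhE] := minimizer_theta (lam_gt0 i) nu1_gt0 nu2_gt0 gp gl hp min_i.
  by split=> //; exact: minimizer_lt min_i.
exists nu1, nu2; do 2 split=> //; exists (fun i => 2 * nu1 * g i).
split=> [i|]; first by have [_ th _] := comp i; split=> // t'; exact: theta_eq_uniq.
split=> [i|]; first by have [_ _ ->] := comp i; split=> //; field; rewrite gt_eqF.
by do 2 split=> //; move=> i; have [] := comp i.
Qed.

Lemma D_inactive_solution D P : inactive_D lam D P ->
  (forall g lh, optimal lam (feasible lam D P) g lh ->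
     (forall i, g i = lam i) /\
     \sum_(i < L) Pl (lam i) (lh i) <= P /\
     \sum_(i < L) (lam i + lh i) <= D /\ (forall i, 0 <= lh i)) /\
  (forall lh : 'I_L -> R,
     \sum_(i < L) Pl (lam i) (lh i) <= P ->
     \sum_(i < L) (lam i + lh i) <= D -> (forall i, 0 <= lh i) ->
     optimal lam (feasible lam D P) lam lh).
Proof.
move=> [g0 [lh0 [[[b0 p0] opt0] f0]]].
have Dsum_lam lh : \sum_(i < L) Dl (lam i) (lam i) (lh i) = \sum_(i < L) (lam i + lh i).
  by apply: eq_bigr => i _; rewrite Dl_id.
have r0 : rate_obj lam g0 = 0.
  apply/eqP; rewrite eq_le (rate_obj_ge0 b0) andbT -(rate_obj_lam lam_gt0).
  by apply: (opt0 lam lh0); split=> // i; have [_ [_ ?]] := b0 i.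
split=> [g lh [[bx [dx px]] opt]|lh p d lhp].
- have rg : rate_obj lam g = 0.
    by apply/eqP; rewrite eq_le (rate_obj_ge0 bx) andbT -r0; exact: opt f0.
  have gE := rate_obj_eq0 lam_gt0 bx rg; do 2 split=> //.
  split; last by move=> i; have [_ []] := bx i.
  by move: dx; rewrite /dist_cons; under eq_bigr => i _ do rewrite gE Dl_id.
- split=> [|g' lh' [b' _]]; last by rewrite rate_obj_lam // (rate_obj_ge0 b').
  by split=> [i|]; [split | rewrite /dist_cons Dsum_lam].
Qed.

End Cases.

(** * Reverse water-filling *)

Section WaterFilling.
Variables (R : realType) (L : nat) (lam : 'I_L -> R).
Hypothesis lam_gt0 : forall i, 0 < lam i.
Implicit Types (g lh : 'I_L -> R) (th : R).

Definition water th i := Num.min th (lam i).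

Lemma water_gt0 th i : 0 < th -> 0 < water th i.
Proof. by move=> th0; rewrite lt_min th0 lam_gt0. Qed.

Lemma water_le th i : water th i <= lam i.
Proof. by rewrite ge_min lexx orbT. Qed.

Lemma sum_pospart_water th :
  \sum_(i < L) pospart (lam i - th) = \sum_(i < L) lam i - \sum_(i < L) water th i.
Proof.
rewrite -sumrB; apply: eq_bigr => i _; rewrite /pospart /water.
by case: (lerP th (lam i)) => h; [rewrite max_r ?subr_ge0 | rewrite max_l ?subrr // subr_le0 ltW].
Qed.

Lemma water_level D : 0 < D -> D < \sum_(i < L) lam i ->
  exists2 th, 0 < th & \sum_(i < L) water th i = D.
Proof.
move=> D0 DS; pose f th := \sum_(i < L) water th i; pose S := \sum_(i < L) lam i.
have f_cont : continuous f.
  apply: continuous_sum => i th.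
  by apply: continuous_min; [exact: cvg_id | exact: cvg_cst].
have f0 : f 0 = 0 by rewrite /f big1 // => i _; rewrite /water min_l // ltW.
have fS : f S = S.
  apply: eq_bigr => i _; rewrite /water min_r // /S (bigD1 i) //= lerDl.
  by rewrite sumr_ge0 // => j _; exact: ltW.
have [|th] := @IVT _ f 0 S D (ltW (lt_trans D0 DS)) (continuous_subspaceT f_cont).
  by rewrite f0 fS min_l ?max_r ?(ltW D0) ?ltW // (lt_trans D0 DS).
rewrite in_itv /= => /andP[th0 _] fth; exists th => //.
rewrite lt_neqAle th0 andbT; apply/negP => /eqP th_0.
by move: D0; rewrite -fth -th_0 f0 ltxx.
Qed.

(* Gibbs-type argument: [ln u <= u - 1], with equality only at [u = 1] *)
Lemma water_filling_unique th g : 0 < th ->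
  (forall i, 0 < g i) -> (forall i, g i <= lam i) ->
  \sum_(i < L) ln (water th i) <= \sum_(i < L) ln (g i) ->
  \sum_(i < L) g i <= \sum_(i < L) water th i ->
  forall i, g i = water th i.
Proof.
move=> th0 gp gl hln hs; pose u i := g i / water th i.
have w0 i := water_gt0 i th0.
have u0 i : 0 < u i by rewrite divr_gt0.
have lin i : u i - 1 <= (g i - water th i) / th.
  rewrite /u /water; case: (lerP th (lam i)) => h.
    by rewrite le_eqVlt; apply/orP; left; apply/eqP; field; rewrite gt_eqF.
  have -> : g i / lam i - 1 = - ((lam i - g i) / lam i) by field; rewrite gt_eqF.
  have -> : (g i - lam i) / th = - ((lam i - g i) / th) by rewrite -mulNr opprB.
  by rewrite lerN2 ler_wpM2l ?subr_ge0 // lef_pV2 ?posrE // ltW.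
have sum_lin : \sum_(i < L) (u i - 1) <= 0.
  apply: le_trans (ler_sum _ (fun i _ => lin i)) _.
  by rewrite -mulr_suml sumrB pmulr_lle0 ?invr_gt0 // subr_le0.
have sum_ln : 0 <= \sum_(i < L) ln (u i).
  by rewrite (eq_bigr _ (fun i _ => ln_div (gp i) (w0 i))) sumrB subr_ge0.
have gap_ge0 i : 0 <= u i - 1 - ln (u i) by rewrite subr_ge0 ln_le_subr1.
have gap0 : \sum_(i < L) (u i - 1 - ln (u i)) = 0.
  by apply/eqP; rewrite eq_le sumr_ge0 // andbT sumrB; lra.
move=> i; have gap_i := @psumr_eq0P _ _ _ _ (fun i _ => gap_ge0 i) gap0 i isT.
apply: divr1_eq; apply/eqP/negPn/negP => ui1.
by have := ln_lt_subr1 (u0 i) ui1; rewrite /u in gap_i *; lra.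
Qed.

Lemma lh_of_Dsum_tight g lh : box_cons lam g lh ->
  \sum_(i < L) Dl (lam i) (g i) (lh i) <= \sum_(i < L) g i ->
  forall i, lh i = lam i - g i.
Proof.
move=> bx; have sqE i : Dl (lam i) (g i) (lh i) =
    g i + (Num.sqrt (lh i) - Num.sqrt (lam i - g i)) ^+ 2.
  by have [_ [gl hp]] := bx i; rewrite DlE.
rewrite (eq_bigr _ (fun i _ => sqE i)) big_split /= gerDl => sq_le0 i.
have sq0 : \sum_(i < L) (Num.sqrt (lh i) - Num.sqrt (lam i - g i)) ^+ 2 = 0.
  by apply/eqP; rewrite eq_le sq_le0 sumr_ge0 // => j _; exact: sqr_ge0.
have [_ [gl hp]] := bx i; move: (@psumr_eq0P _ _ _ _ (fun i _ => sqr_ge0 _) sq0 i isT).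
move/eqP; rewrite sqrf_eq0 subr_eq0 => /eqP /(congr1 (fun x => x ^+ 2)).
by rewrite !sqr_sqrtr // subr_ge0.
Qed.


Lemma strictly_feasible_D_gt0 D P : strictly_feasible lam D P -> 0 < D.
Proof.
move=> [g [lh [bx [dx _]]]]; apply: le_lt_trans dx; rewrite sumr_ge0 // => i _.
by have [gp [gl hp]] := bx i; rewrite (le_trans (ltW gp)) ?Dl_ge.
Qed.

Lemma D_lt_sum_lam D P : active_D lam D P -> inactive_P lam D P -> D < \sum_(i < L) lam i.
Proof.
move=> aD [g0 [lh0 [[[b0 _] opt0] f0]]]; rewrite ltNge; apply/negP => SD; apply: aD.
have r0 : rate_obj lam g0 = 0.
  apply/eqP; rewrite eq_le (rate_obj_ge0 b0) andbT -(rate_obj_lam lam_gt0).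
  apply: (opt0 lam (fun=> 0)); split=> [i|]; first by split.
  by rewrite /dist_cons (eq_bigr lam) // => i _; rewrite Dl_id addr0.
exists g0, lh0; split=> //; split=> [|g' lh' [b' _]]; last by rewrite r0 (rate_obj_ge0 b').
by case: f0 => ? [].
Qed.

Lemma P_inactive_solution D P g lh :
  strictly_feasible lam D P -> active_D lam D P -> inactive_P lam D P ->
  optimal lam (feasible lam D P) g lh ->
  exists nu1 : R, 0 < nu1 /\
    \sum_(i < L) pospart (lam i - 1 / (2 * nu1)) = pospart (\sum_(i < L) lam i - D) /\
    (forall i, g i = Num.min (1 / (2 * nu1)) (lam i) /\
               lh i = lam i - Num.min (1 / (2 * nu1)) (lam i)).
Proof.
move=> sf aD iP [[bx [dx _]] opt_g].
have DS := D_lt_sum_lam aD iP.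
have [th th0 wD] := water_level (strictly_feasible_D_gt0 sf) DS.
have [g0 [lh0 [[_ opt0] f0]]] := iP.
have wl := water_le th; have w0 i := water_gt0 i th0.
have gp i : 0 < g i by have [] := bx i.
have gl i : g i <= lam i by have [_ []] := bx i.
have fw : feasible_noP lam D (water th) (fun i => lam i - water th i).
  split=> [i|]; first by rewrite subr_ge0 wl.
  rewrite /dist_cons -[X in _ <= X]wD le_eqVlt; apply/orP; left; apply/eqP.
  by apply: eq_bigr => i _; rewrite DlE ?subr_ge0 // subrr expr0n addr0.
have hln : \sum_(i < L) ln (water th i) <= \sum_(i < L) ln (g i).
  have := le_trans (opt_g _ _ f0) (opt0 _ _ fw).
  by rewrite !rate_objE // ler_pM2l ?invr_gt0 //; lra.
have sg : \sum_(i < L) g i <= D.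
  by apply: le_trans dx; apply: ler_sum => i _; have [_ [? ?]] := bx i; exact: Dl_ge.
have sgw : \sum_(i < L) g i <= \sum_(i < L) water th i by rewrite wD.
have gE := water_filling_unique th0 gp gl hln sgw.
have lhE : forall i, lh i = lam i - g i.
  by apply: lh_of_Dsum_tight bx _; rewrite (eq_bigr _ (fun i _ => gE i)) wD.
exists (2 * th)^-1; rewrite invr_gt0 mulr_gt0 //.
have -> : 1 / (2 * (2 * th)^-1) = th by field; rewrite gt_eqF.
rewrite sum_pospart_water wD /pospart max_r ?subr_ge0 ?ltW //.
by do 2 split=> //; move=> i; rewrite lhE gE.
Qed.

End WaterFilling.

(** * Existence of an optimum *)

Section Existence.
Variables (R : realType) (L : nat) (lam : 'I_L -> R).
Hypothesis lam_gt0 : forall i, 0 < lam i.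
Implicit Types (g lh : 'I_L -> R) (v : 'rV[R]_(L + L)).

Definition pack g lh : 'rV[R]_(L + L) := row_mx (\row_i g i) (\row_i lh i).
Definition unpack_g v i := v ord0 (lshift L i).
Definition unpack_lh v i := v ord0 (rshift L i).

Lemma unpack_gK g lh : unpack_g (pack g lh) = g.
Proof. by apply/funext => i; rewrite /unpack_g row_mxEl mxE. Qed.

Lemma unpack_lhK g lh : unpack_lh (pack g lh) = lh.
Proof. by apply/funext => i; rewrite /unpack_lh row_mxEr mxE. Qed.

Lemma Dsum_unpack_continuous :
  continuous (fun v => Dsum lam (unpack_g v) (unpack_lh v)).
Proof. by apply: continuous_sum => i; apply: Dl_continuous; exact: coord_continuous. Qed.

Lemma Psum_unpack_continuous : continuous (fun v => Psum lam (unpack_lh v)).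
Proof. by apply: continuous_sum => i; apply: Pl_continuous; exact: coord_continuous. Qed.

Lemma prod_unpack_continuous : continuous (fun v => \prod_(i < L) unpack_g v i).
Proof. by apply: continuous_prod => i; exact: coord_continuous. Qed.

(* the feasible set with [0 <= g] allowed, inside the box given by
   [lh i <= (sqrt (lam i) + sqrt P) ^+ 2], which the perception constraint implies *)
Definition box_bound P (j : 'I_(L + L)) : set R :=
  match fintype.split j with
  | inl i => `[0, lam i]%classic
  | inr i => `[0, (Num.sqrt (lam i) + Num.sqrt P) ^+ 2]%classic
  end.

Definition relaxed D P : set 'rV[R]_(L + L) :=
  ([set v : 'rV[R]_(L + L) | forall j, box_bound P j (v ord0 j)] `&`
   [set v | Dsum lam (unpack_g v) (unpack_lh v) <= D] `&`
   [set v | Psum lam (unpack_lh v) <= P])%classic.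

Lemma relaxed_compact D P : compact (relaxed D P).
Proof.
apply: compact_closedI; last first.
  apply: (@preimage_closed _ _ (fun v => Psum lam (unpack_lh v))
    [set x | x <= P]%classic); last exact: closed_le.
  by move=> v _; exact: Psum_unpack_continuous.
apply: compact_closedI; last first.
  apply: (@preimage_closed _ _ (fun v => Dsum lam (unpack_g v) (unpack_lh v))
    [set x | x <= D]%classic); last exact: closed_le.
  by move=> v _; exact: Dsum_unpack_continuous.
by apply: rV_compact => j; rewrite /box_bound; case: fintype.split => i; exact: segment_compact.
Qed.

Lemma feasible_relaxed D P g lh : feasible lam D P g lh -> relaxed D P (pack g lh).
Proof.
move=> [bx [dx px]]; rewrite /relaxed /= unpack_gK unpack_lhK; split=> //; split=> // j.
rewrite /box_bound /pack mxE; case: fintype.split => i; rewrite mxE /= in_itv /=.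
  by have [gp [-> _]] := bx i; rewrite ltW.
have [_ [_ hp]] := bx i; rewrite hp Pl_le_sqr_bound ?(ltW (lam_gt0 i)) //.
by rewrite (le_trans _ px) // (bigD1 i) //= lerDl sumr_ge0 // => k _; exact: sqr_ge0.
Qed.

Lemma relaxed_box D P v : relaxed D P v ->
  forall i, 0 <= unpack_g v i <= lam i /\ 0 <= unpack_lh v i.
Proof.
move=> [[vb _] _] i; move: (vb (lshift L i)) (vb (rshift L i)); rewrite /box_bound.
have -> : fintype.split (lshift L i) = inl i := unsplitK (inl i).
have -> : fintype.split (rshift L i) = inr i := unsplitK (inr i).
by rewrite /= !in_itv /= => -> /andP[].
Qed.

Lemma rate_obj_le_prod g g' : (forall i, 0 < g i) -> (forall i, 0 < g' i) ->
  \prod_(i < L) g' i <= \prod_(i < L) g i -> rate_obj lam g <= rate_obj lam g'.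
Proof.
move=> gp gp' le_prod; rewrite !rate_objE // -!ln_prod //.
by rewrite ler_wpM2l ?invr_ge0 // lerB // ler_ln ?posrE ?prodr_gt0.
Qed.

Lemma exists_optimal D P : strictly_feasible lam D P ->
  exists g lh, optimal lam (feasible lam D P) g lh.
Proof.
move=> [g0 [lh0 [b0 [d0 p0]]]].
have f0 : feasible lam D P g0 lh0 by split=> //; split; exact: ltW.
have [c /set_mem cK cmax] := compact_EVT_max (ex_intro _ _ (feasible_relaxed f0))
  (relaxed_compact (D := D) (P := P)) (continuous_subspaceT prod_unpack_continuous).
have prod_le g lh : feasible lam D P g lh -> \prod_(i < L) g i <= \prod_(i < L) unpack_g c i.
  by move=> f; have := cmax _ (mem_set (feasible_relaxed f)); rewrite unpack_gK.
have cb := relaxed_box cK.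
have c_gt0 i : 0 < unpack_g c i.
  have [/andP[ci0 _] _] := cb i; rewrite lt_neqAle ci0 andbT; apply/eqP => ci_0.
  have := prod_le _ _ f0; rewrite [X in _ <= X](bigD1 i) //= -ci_0 mul0r leNgt prodr_gt0 //.
  by move=> j _; have [] := b0 j.
exists (unpack_g c), (unpack_lh c); split.
  case: cK => [[_ cd] cp]; split=> //.
  by move=> i; have [/andP[_ ?] ?] := cb i.
move=> g' lh' f'; apply: rate_obj_le_prod (prod_le _ _ f') => // i.
by case: f' => /(_ i) [].
Qed.

End Existence.

Unset Implicit Arguments.
Set Strict Implicit.

Theorem theorem6 (R : realType) (L : nat) (lam : 'I_L -> R) (D P : R) :
  (forall i, 0 < lam i) ->
  strictly_feasible lam D P ->
  (* an optimal solution exists *)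
  (exists g lh, optimal lam (feasible lam D P) g lh) /\
  (* (1) both constraints active *)
  (active_D lam D P -> active_P lam D P ->
   forall g lh, optimal lam (feasible lam D P) g lh ->
   exists nu1 nu2 : R, 0 < nu1 /\ 0 < nu2 /\
   exists theta : 'I_L -> R,
     (forall i, theta_unique_sol nu1 nu2 (lam i) (theta i)) /\
     (forall i, g i = theta i / (2 * nu1) /\
                lh i = lam i / (1 + (1 - theta i) * nu1 / nu2) ^+ 2) /\
     \sum_(i < L) Dl (lam i) (g i) (lh i) = D /\
     \sum_(i < L) Pl (lam i) (lh i) = P /\
     (forall i, g i < lam i)) /\
  (* (2) distortion active, perception inactive *)
  (active_D lam D P -> inactive_P lam D P ->
   forall g lh, optimal lam (feasible lam D P) g lh ->
   exists nu1 : R, 0 < nu1 /\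
     \sum_(i < L) pospart (lam i - 1 / (2 * nu1)) =
       pospart (\sum_(i < L) lam i - D) /\
     (forall i, g i = Num.min (1 / (2 * nu1)) (lam i) /\
                lh i = lam i - Num.min (1 / (2 * nu1)) (lam i))) /\
  (* (3) distortion inactive *)
  (inactive_D lam D P ->
   (forall g lh, optimal lam (feasible lam D P) g lh ->
      (forall i, g i = lam i) /\
      \sum_(i < L) Pl (lam i) (lh i) <= P /\
      \sum_(i < L) (lam i + lh i) <= D /\ (forall i, 0 <= lh i)) /\
   (forall lh : 'I_L -> R,
      \sum_(i < L) Pl (lam i) (lh i) <= P ->
      \sum_(i < L) (lam i + lh i) <= D -> (forall i, 0 <= lh i) ->
      optimal lam (feasible lam D P) lam lh)).
Proof.
move=> lam_gt0 sf; split; first exact: (exists_optimal lam_gt0 sf).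
split; first by move=> aD aP g lh opt; exact: (both_active_solution lam_gt0 sf opt aD aP).
split; first by move=> aD iP g lh; exact: (P_inactive_solution lam_gt0 sf aD iP).
exact: (D_inactive_solution lam_gt0).
Qed.
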